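(* Let $\mathcal{H}$ be a $3$-graph and let $\mathcal{H}_t$ be a $3$-graph obtained from $\mathcal{H}$ by applying Algorithm 1 (described in the context). Let $T\subseteq V(\mathcal{H}_t)$ contain exactly one vertex from each equivalence class of $\mathcal{H}_t$. Then (a) $|\mathcal{H}_t|\ge|\mathcal{H}|$; and (b) $\mathcal{H}_t[T]$ is $2$-covered and $\mathcal{H}_t$ is a blowup of $\mathcal{H}_t[T]$.
   Context: For a vertex $v$ of a $3$-graph $\mathcal{H}$, its link is $L(v)=\{A\in\binom{V(\mathcal{H})}{2}: A\cup\{v\}\in\mathcal{H}\}$ and its degree is $d(v)=|L(v)|$. Two vertices are adjacent if some edge contains both. Two non-adjacent vertices $u,v$ are equivalent if $L(u)=L(v)$ (every vertex is equivalent to itself); $C_v$ denotes the equivalence class of $v$. Algorithm 1 (symmetrization): as long as $\mathcal{H}$ has two non-adjacent non-equivalent vertices, pick such $u,v$ with $d(u)\ge d(v)$, delete all vertices of $C_v$ (with their edges) and add $|C_v|$ new vertices, each a copy of $u$ (i.e. for every edge $E\ni u$ and each new vertex $v'$, add $E\setminus\{u\}\cup\{v'\}$), labelling the new vertices by the labels of $C_v$. Stop when no pair of non-adjacent non-equivalent vertices remains; the result is $\mathcal{H}_t$. A $3$-graph is $2$-covered if every pair of its vertices lies in some edge. A blowup of a $3$-graph $\mathcal{T}$ on $[s]$ replaces vertex $i$ by a set of size $t_i\ge1$ (pairwise disjoint) and each edge by the complete $3$-partite $3$-graph on the corresponding sets. *)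

From mathcomp Require Import all_boot.
Set Implicit Arguments. Unset Strict Implicit. Unset Printing Implicit Defensive.

Section Hyper.
Variable V : finType.
Implicit Types (H G : {set {set V}}) (T : {set V}) (u v w : V).

Definition is3graph H : Prop := forall E, E \in H -> #|E| = 3.

Definition link H v : {set {set V}} :=
  [set A : {set V} | (#|A| == 2) && ((A :|: [set v]) \in H)].

Definition deg H v : nat := #|link H v|.

Definition adj H u v : bool := [exists E in H, (u \in E) && (v \in E)].

Definition equiv H u v : bool :=
  (u == v) || (~~ adj H u v && (link H u == link H v)).

Definition eclass H v : {set V} := [set w | equiv H v w].

(* One step of Algorithm 1 with chosen u, v: delete the vertices of C_v
   (and their edges), and re-add them (keeping their labels) as copies of u. *)
Definition sym_step H u v : {set {set V}} :=
  [set E in H | [disjoint E & eclass H v]] :|: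
  [set (E :\ u) :|: [set w] | E in [set E in H | u \in E], w in eclass H v].

Definition alg_step H H' : Prop :=
  exists u v, [/\ ~~ adj H u v, ~~ equiv H u v, deg H v <= deg H u
               & H' = sym_step H u v].

Definition alg_terminal H : Prop := forall u v, adj H u v || equiv H u v.

Inductive alg_reach : {set {set V}} -> {set {set V}} -> Prop :=
| alg_refl H : alg_reach H H
| alg_next H H' H'' : alg_step H H' -> alg_reach H' H'' -> alg_reach H H''.

Definition alg_output H Ht : Prop := alg_reach H Ht /\ alg_terminal Ht.

Definition induced H T : {set {set V}} := [set E in H | E \subset T].

Definition two_covered G T : Prop :=
  forall x y, x \in T -> y \in T -> x != y ->
    exists2 E, E \in G & (x \in E) && (y \in E).

(* H (on vertex set V) is a blowup of G (on vertex set T): vertex t in T is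
   replaced by the nonempty part f^-1(t), and each edge by the complete
   3-partite 3-graph on the corresponding parts. *)
Definition blowup_of H G T : Prop :=
  exists f : V -> V,
    [/\ forall x, f x \in T,
        forall t, t \in T -> exists x, f x = t
      & H = [set E : {set V} | [&& #|E| == 3, #|f @: E| == 3 & f @: E \in G]]].

End Hyper.

From Pilot Require Import Defs.
From mathcomp Require Import all_boot.

Set Implicit Arguments. Unset Strict Implicit. Unset Printing Implicit Defensive.

(* In a 3-graph, replacing a vertex of an edge by an equivalent vertex gives
   again an edge, because equivalent vertices have the same link.
   A symmetrization step removes the edges meeting C_v, at most |C_v| d(v) of
   them, and adds the |C_v| d(u) >= |C_v| d(v) sets E - u + w (u in E,
   w in C_v); as no vertex of C_v is adjacent to u, these are distinct 3-sets, and they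
   meet C_v, so they are new.  Hence |H| never decreases along Algorithm 1.
   In the final 3-graph any two vertices are adjacent or equivalent.  Sending
   each vertex to the representative of its class in T maps edges to edges of
   H_t[T], and a 3-set whose image is an edge is itself an edge: this is the
   blowup.  Distinct vertices of T are not equivalent, hence adjacent, and the
   image of an edge through them covers them in H_t[T]. *)

Section Basics.
Variable V : finType.
Implicit Types (H : {set {set V}}) (E : {set V}) (a b c v w x y : V).

Lemma adjC H x y : adj H x y = adj H y x.
Proof.
by apply/existsP/existsP => -[E /and3P[HE xE yE]]; exists E; rewrite HE xE yE.
Qed.

Lemma adj_edge H E x y : E \in H -> x \in E -> y \in E -> adj H x y.
Proof. by move=> HE xE yE; apply/existsP; exists E; rewrite HE xE yE. Qed.

Lemma equivxx H x : Defs.equiv H x x.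
Proof. by rewrite /Defs.equiv eqxx. Qed.

Lemma equivC H x y : Defs.equiv H x y = Defs.equiv H y x.
Proof. by rewrite /Defs.equiv eq_sym adjC (eq_sym (link H x)). Qed.

Lemma equiv_link H x y : Defs.equiv H x y -> link H x = link H y.
Proof. by case/orP => [/eqP ->|/andP[_ /eqP]]. Qed.

Lemma eclass_link H v w : w \in eclass H v -> link H w = link H v.
Proof. by rewrite inE => /equiv_link. Qed.

Lemma cards3P E : #|E| = 3 -> exists a b c, E = [set a; b; c].
Proof.
move=> E3; have /card_gt0P[a aE] : 0 < #|E| by rewrite E3.
have /cards2P[b [c [_ Ea]]] : #|E :\ a| == 2.
  by move: (cardsD1 a E); rewrite aE E3 add1n => -[<-].
by exists a, b, c; rewrite -setUA -Ea setD1K.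
Qed.

Lemma imset_set3 (f : V -> V) a b c : f @: [set a; b; c] = [set f a; f b; f c].
Proof. by rewrite -!setUA !imsetU1 imset_set1. Qed.

End Basics.

Section ThreeGraph.
Variables (V : finType) (H : {set {set V}}).
Hypothesis H3 : is3graph H.
Implicit Types (A E : {set V}) (a b c x y : V).

Lemma cards_edgeD1 E x : E \in H -> x \in E -> #|E :\ x| = 2.
Proof.
by move=> HE xE; move: (cardsD1 x E); rewrite xE (H3 HE) add1n => -[].
Qed.

Lemma link_swap A x y :
  link H x = link H y -> x \notin A -> x |: A \in H -> y |: A \in H.
Proof.
move=> Lxy xA xAH; have : A \in link H x.
  by rewrite inE setUC xAH andbT -(cards_edgeD1 xAH (setU11 x A)) setU1K.
by rewrite Lxy inE setUC => /andP[].
Qed.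

Lemma equiv_swap A x y :
  Defs.equiv H x y -> x \notin A -> x |: A \in H -> y |: A \in H.
Proof. by move/equiv_link; apply: link_swap. Qed.

Lemma equiv_rotate a b c a' :
  [set a; b; c] \in H -> Defs.equiv H a a' -> [set b; c; a'] \in H.
Proof.
move=> Eabc eaa'; rewrite setUC.
apply: equiv_swap eaa' _ _; last by rewrite setUA.
apply: contra_eqN (H3 Eabc) => aE.
by rewrite -setUA (setUidPr _) ?sub1set // cards2; case: (b != c).
Qed.

Lemma equiv_triple_edge a b c a' b' c' :
  [set a; b; c] \in H ->
  Defs.equiv H a a' -> Defs.equiv H b b' -> Defs.equiv H c c' ->
  [set a'; b'; c'] \in H.
Proof.
move=> Eabc ea eb ec.
by apply: equiv_rotate ec; apply: equiv_rotate eb; apply: equiv_rotate ea.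
Qed.

Lemma imset_equiv_edge (g : V -> V) E :
  (forall x, Defs.equiv H x (g x)) -> #|E| = 3 -> (g @: E \in H) = (E \in H).
Proof.
move=> eg /cards3P[a [b [c ->]]]; rewrite imset_set3.
by apply/idP/idP => /equiv_triple_edge; apply; rewrite // equivC.
Qed.

Lemma deg_card_edges x : deg H x = #|[set E in H | x \in E]|.
Proof.
rewrite /deg.
have -> : link H x = (fun E => E :\ x) @: [set E in H | x \in E].
  apply/setP => A; apply/idP/imsetP => [|[E]]; last first.
    move=> /[1!inE] /andP[HE xE] ->.
    by rewrite inE (cards_edgeD1 HE xE) setUC setD1K.
  rewrite inE => /andP[/eqP A2 AxH].
  have xA : x \notin A.
    by apply: contra_eqN (H3 AxH) => xA; rewrite (setUidPl _) ?sub1set // A2.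
  by exists (x |: A); rewrite ?setU1K // inE setUC AxH !inE eqxx orbT.
rewrite card_in_imset // => E F; rewrite !inE => /andP[_ xE] /andP[_ xF] EF.
by rewrite -(setD1K xE) EF setD1K.
Qed.

End ThreeGraph.

Section SymmetrizationStep.
Variables (V : finType) (H : {set {set V}}) (u v : V).
Hypotheses (H3 : is3graph H) (nadj_uv : ~~ adj H u v)
  (nequiv_uv : ~~ Defs.equiv H u v).

Local Notation C := (eclass H v).
Local Notation edges_u := [set E in H | u \in E].
Local Notation kept := [set E in H | [disjoint E & C]].
Local Notation copies := [set (E :\ u) :|: [set w] | E in edges_u, w in C].

Lemma eclass_notin_edge w E : w \in C -> E \in H -> u \in E -> w \notin E.
Proof.
rewrite inE => evw HE uE; apply/negP => wE.
have uw : u != w by apply: contraNneq nequiv_uv => ->; rewrite equivC.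
have vwE : v |: (E :\ w) \in H.
  by apply: (equiv_swap H3 (x := w)); rewrite ?setD11 ?setD1K // equivC.
have : adj H u v by apply: (adj_edge vwE); rewrite !inE ?eqxx ?uw ?uE ?orbT.
by rewrite (negbTE nadj_uv).
Qed.

Lemma sym_step_3graph : is3graph (sym_step H u v).
Proof.
move=> E /setUP[|/imset2P[F w]]; first by rewrite inE => /andP[/H3].
rewrite inE => /andP[HF uF] wC ->.
rewrite setUC cardsU1 (cards_edgeD1 H3 HF uF).
by rewrite inE (negbTE (eclass_notin_edge wC HF uF)) andbF.
Qed.

Lemma card_edges_meeting_eclass :
  #|[set E in H | ~~ [disjoint E & C]]| <= #|C| * deg H v.
Proof.
rewrite /deg -cardsX.
apply: leq_trans (leq_imset_card (fun p : V * {set V} => p.2 :|: [set p.1]) _).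
apply/subset_leq_card/subsetP => E; rewrite inE => /andP[HE].
rewrite -setI_eq0 => /set0Pn[w]; rewrite inE => /andP[wE wC].
apply/imsetP; exists (w, E :\ w); last by rewrite /= setUC setD1K.
rewrite in_setX wC -(eclass_link wC) inE setUC setD1K //.
by rewrite HE (cards_edgeD1 H3 HE wE).
Qed.

Lemma card_copies : #|copies| = #|edges_u| * #|C|.
Proof.
rewrite -cardsX curry_imset2X card_in_imset // => -[E w] [F w'].
rewrite !in_setX /= => /andP[Eu wC] /andP[Fu w'C]; rewrite !inE in Eu Fu.
case/andP: Eu => HE uE; case/andP: Fu => HF uF EF.
have wE := eclass_notin_edge wC HE uE; have w'F := eclass_notin_edge w'C HF uF.
have ww' : w' = w.
  have : w' \in E :\ u :|: [set w] by rewrite EF !inE eqxx orbT.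
  by rewrite !inE (negbTE (eclass_notin_edge w'C HE uE)) andbF => /eqP.
subst w'; move/(congr1 (fun X => X :\ w)): EF.
rewrite !(setUC _ [set w]) !setU1K ?inE ?(negbTE wE) ?(negbTE w'F) ?andbF //.
move=> EF.
by rewrite -(setD1K uE) EF setD1K.
Qed.

Lemma card_sym_step : deg H v <= deg H u -> #|H| <= #|sym_step H u v|.
Proof.
move=> le_deg.
have kept_copies : [disjoint kept & copies].
  rewrite -setI_eq0; apply/set0Pn => -[E]; rewrite !inE.
  case/andP => /andP[_ disEC] /imset2P[F w _ wC EFw].
  by rewrite (disjointFr disEC) // EFw !inE eqxx orbT in wC.
have meeting : H :\: kept = [set E in H | ~~ [disjoint E & C]].
  by apply/setP => E; rewrite !inE andbC; case: (E \in H).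
rewrite /sym_step cardsU (disjoint_setI0 kept_copies) cards0 subn0.
rewrite -(cardsID kept H) (setIidPr _) ?subset_imset ?leq_add2l; last first.
  by apply/subsetP => E; rewrite inE => /andP[].
rewrite meeting card_copies -(deg_card_edges H3) mulnC.
exact: leq_trans card_edges_meeting_eclass (leq_mul (leqnn _) le_deg).
Qed.

End SymmetrizationStep.

Lemma alg_reach_3graph_card (V : finType) (H Ht : {set {set V}}) :
  alg_reach H Ht -> is3graph H -> is3graph Ht /\ #|H| <= #|Ht|.
Proof.
elim=> [//|{}H H' {}Ht [u [v [nadj nequiv le_deg ->]]] _ IH] H3.
have [Ht3 le_card] := IH (sym_step_3graph H3 nadj nequiv).
by split=> //; apply: leq_trans le_card; apply: card_sym_step.
Qed.

Definition class_rep (V : finType) (G : {set {set V}}) (T : {set V}) (x : V)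
    : V :=
  odflt x [pick y in T :&: eclass G x].

Section Transversal.
Variables (V : finType) (G : {set {set V}}) (T : {set V}).
Hypotheses (G3 : is3graph G) (Gterm : alg_terminal G)
  (T_transversal : forall v, #|T :&: eclass G v| = 1).

Implicit Types (E : {set V}) (x y t : V).

Local Notation f := (class_rep G T).

Lemma class_repP x : f x \in T /\ Defs.equiv G x (f x).
Proof.
suff : f x \in T :&: eclass G x by rewrite !inE => /andP.
rewrite /class_rep; case: pickP => [//|none].
have /card_gt0P[y yTx] : 0 < #|T :&: eclass G x| by rewrite T_transversal.
by rewrite none in yTx.
Qed.

Lemma transversal_equiv_eq x y :
  x \in T -> y \in T -> Defs.equiv G x y -> x = y.
Proof.
move=> xT yT exy; have /cards1P[z Tx] := introT eqP (T_transversal x).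
have : x \in T :&: eclass G x by rewrite !inE xT equivxx.
have : y \in T :&: eclass G x by rewrite !inE yT exy.
by rewrite Tx !inE => /eqP-> /eqP->.
Qed.

Lemma class_rep_id t : t \in T -> f t = t.
Proof.
by move=> tT; have [fT etf] := class_repP t; exact/esym/transversal_equiv_eq.
Qed.

Lemma class_rep_edge E : #|E| = 3 -> (f @: E \in G) = (E \in G).
Proof. by apply: imset_equiv_edge => // x; case: (class_repP x). Qed.

Lemma imset_class_rep_sub E : f @: E \subset T.
Proof. by apply/subsetP => _ /imsetP[x _ ->]; case: (class_repP x). Qed.

Lemma transversal_two_covered : two_covered (induced G T) T.
Proof.
move=> x y xT yT nxy.
have /existsP[E /and3P[GE xE yE]] : adj G x y.
  case/orP: (Gterm x y) => // /(transversal_equiv_eq xT yT) exy.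
  by rewrite exy eqxx in nxy.
exists (f @: E).
  by rewrite inE imset_class_rep_sub class_rep_edge ?G3 ?andbT.
by rewrite -(class_rep_id xT) -(class_rep_id yT) !imset_f.
Qed.

Lemma transversal_blowup : blowup_of G (induced G T) T.
Proof.
exists f; split=> [x|t tT|]; first by case: (class_repP x).
  by exists t; apply: class_rep_id.
apply/setP => E; rewrite !inE imset_class_rep_sub andbT.
apply/idP/and3P => [GE|[/eqP E3 _]]; last by rewrite class_rep_edge.
have fE : f @: E \in G by rewrite class_rep_edge ?G3.
by rewrite (G3 GE) (G3 fE) fE.
Qed.

End Transversal.

Theorem lemma4p6 (V : finType) (H Ht : {set {set V}}) (T : {set V}) :
  is3graph H ->
  alg_output H Ht ->
  (forall v : V, #|T :&: eclass Ht v| = 1) ->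
  #|H| <= #|Ht| /\
  two_covered (induced Ht T) T /\ blowup_of Ht (induced Ht T) T.
Proof.
move=> H3 [reach term] T_transversal.
have [Ht3 le_card] := alg_reach_3graph_card reach H3.
split=> //; split.
- exact: transversal_two_covered Ht3 term T_transversal.
- exact: transversal_blowup Ht3 T_transversal.
Qed.
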